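(* Let $(A,\{m_k\}_{k\ge0})$ be a $\mathbb Z_2$-graded filtered $A_\infty$-algebra over $\Lambda_0$ with a unit $\mathbf 1$, free of finite rank with a basis consisting of $\mathbf 1$, a finite set $\{X_e\}_{e\in E}$ of odd-degree elements, a set $\{X_f\}_{f\in F}$ of even-degree elements, and possibly further odd-degree elements (e.g. $A$ is the Floer cochain complex of a compact immersed Lagrangian, with $X_e$ the odd-degree immersed generators). Let $K=\Lambda_0\langle\langle x_e:e\in E\rangle\rangle$ be the algebra of noncommutative formal power series in variables $x_e$ of degree $0$, and extend the $A_\infty$-operations to $K\widehat\otimes_{\Lambda_0}A$ by the rule $m_k(f_1Y_1,\dots,f_kY_k)=f_k\cdots f_1\,m_k(Y_1,\dots,Y_k)$ for $f_j\in K$. Put $b=\sum_{e\in E}x_eX_e$ and write $$m_0^b:=\sum_{k\ge0}m_k(b,\dots,b)=W\cdot\mathbf 1+\sum_{f\in F}P_f\,X_f\qquad(W,P_f\in K).$$ Let $\mathcal A=K/\langle P_f:f\in F\rangle$, the quotient by the completed two-sided ideal generated by the $P_f$. Then the image of $W$ in $\mathcal A$ is central: $W\cdot x_e=x_e\cdot W$ in $\mathcal A$ for every $e\in E$.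
   Context: The $A_\infty$-operations $m_k$ have degree one with respect to the shifted grading $|v|'=|v|-1$ and satisfy the $A_\infty$-equations $\sum_{k_1+k_2=n+1}\sum_i(-1)^{\sum_{j<i}|v_j|'}m_{k_1}(v_1,\dots,m_{k_2}(v_i,\dots,v_{i+k_2-1}),\dots,v_n)=0$. An element $\mathbf 1$ of degree $0$ is a unit if $m_2(\mathbf 1,v)=v$, $(-1)^{|w|}m_2(w,\mathbf 1)=w$ for all $v,w$, and $m_k(\dots,\mathbf 1,\dots)=0$ for $k\neq2$. Since $b$ has odd degree, $m_0^b$ has even degree, so its expansion in the basis involves only $\mathbf 1$ and the even elements $X_f$. The sum defining $m_0^b$ converges in $K\widehat\otimes A$ because $m_k(b,\dots,b)$ is homogeneous of degree $k$ in the variables $x_e$. The completed two-sided ideal $\langle P_f\rangle$ is the closure of the two-sided ideal generated by the $P_f$. *)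

From HB Require Import structures.
From mathcomp Require Import all_boot all_algebra.
Set Implicit Arguments. Unset Strict Implicit. Unset Printing Implicit Defensive.
Import GRing.Theory.
Local Open Scope ring_scope.

(* Noncommutative formal power series R<<x_e : e in E>>, represented  *)
(* by their coefficient function on words (seq E).  The word          *)
(* [:: e1; ...; en] stands for the monomial x_e1 x_e2 ... x_en.        *)

Definition ncps (R : Type) (E : Type) := seq E -> R.

Definition ncmul (R : comNzRingType) (E : Type) (f g : ncps R E) : ncps R E :=
  fun w => \sum_(i < (size w).+1) f (take i w) * g (drop i w).

Definition ncone (R : comNzRingType) (E : Type) : ncps R E :=
  fun w => (size w == 0%N)%:R.

Definition ncvar (R : comNzRingType) (E : eqType) (e : E) : ncps R E :=
  fun w => (w == [:: e])%:R.

Definition ncsub (R : comNzRingType) (E : Type) (f g : ncps R E) : ncps R E :=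
  fun w => f w - g w.

(* f_k * ... * f_2 * f_1  for fs = [:: f_1; ...; f_k] (reversed order) *)
Definition nc_rprod (R : comNzRingType) (E : Type) (fs : seq (ncps R E)) : ncps R E :=
  foldl (fun acc f => ncmul f acc) (@ncone R E) fs.

(* x-adically convergent sum  sum_k t_k , for a sequence t with t_k of
   order >= k (i.e. t_k vanishes on words of length < k): the coefficient
   at a word w only receives contributions from k <= size w. *)
Definition ncsum (R : comNzRingType) (E : Type) (t : nat -> ncps R E) : ncps R E :=
  fun w => \sum_(k < (size w).+1) t k w.

Definition nc_ideal (R : comNzRingType) (E : Type) (I : Type)
    (P : I -> ncps R E) (Fp : I -> bool) (h : ncps R E) : Prop :=
  exists ts : seq (ncps R E * I * ncps R E),
    all (fun t => Fp t.1.2) ts /\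
    forall w, h w = \sum_(t <- ts) ncmul (ncmul t.1.1 (P t.1.2)) t.2 w.

(* Closure of that ideal in the x-adic topology of R<<x>>:
   g agrees with an element of the ideal up to any given order. *)
Definition nc_closed_ideal (R : comNzRingType) (E : Type) (I : Type)
    (P : I -> ncps R E) (Fp : I -> bool) (g : ncps R E) : Prop :=
  forall N : nat, exists h, nc_ideal P Fp h /\
    forall w, (size w < N)%N -> g w = h w.

(* Z2-graded unital A_infinity algebra, free of finite rank over R,   *)
(* given by structure constants in a homogeneous basis I:             *)
(*   m_k(Y_{s_1},...,Y_{s_k}) = sum_j c s j * Y_j   (k = size s).      *)
(* deg i = true  iff  Y_i has odd degree.  u indexes the unit 1.       *)

Definition is_unital_Z2_Ainf (R : comNzRingType) (I : finType) (deg : I -> bool)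
    (u : I) (c : seq I -> I -> R) : Prop :=
  [/\ (* m_k has degree one for the shifted grading |v|' = |v| - 1 *)
      (forall s j, c s j != 0 -> deg j = odd (size s + count deg s)),
      (* A_infinity equations on basis elements *)
      (forall s j,
         \sum_(k2 < (size s).+1) \sum_(i < (size s - k2).+1)
            (-1) ^+ count (fun t => ~~ deg t) (take i s) *
            \sum_(l : I) c (take i s ++ l :: drop (i + k2) s) j
                         * c (take k2 (drop i s)) l = 0),
      deg u = false &
    [/\
      (forall i j, c [:: u; i] j = (i == j)%:R),
      (forall i j, (-1) ^+ deg i * c [:: i; u] j = (i == j)%:R) &
      (forall s j, u \in s -> size s != 2%N -> c s j = 0)]].

(* Extension of m_k to K ^(x) A = (I -> K):
   m_k(f_1 Y_1, ..., f_k Y_k) = f_k ... f_1 m_k(Y_1, ..., Y_k). *)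
Definition mK (R : comNzRingType) (I : finType) (E : Type) (c : seq I -> I -> R)
    (v : seq (I -> ncps R E)) (j : I) : ncps R E :=
  fun w => \sum_(s : (size v).-tuple I)
             nc_rprod [seq vp.1 vp.2 | vp <- zip v s] w * c s j.

Definition bvec (R : comNzRingType) (I : finType) (E : finType) (Xe : E -> I)
    : I -> ncps R E :=
  fun i w => \sum_(e : E | Xe e == i) ncvar R e w.

Definition m0b (R : comNzRingType) (I : finType) (E : finType)
    (c : seq I -> I -> R) (Xe : E -> I) : I -> ncps R E :=
  fun j => ncsum (fun k => mK c (nseq k (bvec R Xe)) j).

(* F = the even basis elements other than the unit; P_f = m0b f *)
Definition Fidx (I : finType) (deg : I -> bool) (u : I) : I -> bool :=
  fun i => ~~ deg i && (i != u).

From HB Require Import structures.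
From mathcomp Require Import all_boot all_algebra.
From mathcomp Require Import zify.
Import GRing.Theory.
Local Open Scope ring_scope.
Set Implicit Arguments. Unset Strict Implicit. Unset Printing Implicit Defensive.

(* Since the x_e have degree 0 and the inputs X_e are all odd, the coefficient of the word
   w in m_0^b is the structure constant c(rev w); so the A_oo equation for m_0^b, read on
   the input rev w with output X_e, is a relation between coefficients of series. Sorting
   its terms by the output l of the inner operation: odd l contribute nothing, since m_0^b
   is even; l = 1 contributes, through the unit axioms m_2(1, X_e) = X_e and
   m_2(X_e, 1) = -X_e, exactly the coefficient of x_e W - W x_e; and each l in F contributes
   a coefficient of a series sum_k a_k P_l b_k. Truncating these sums at any word length
   gives elements of the two-sided ideal, so W x_e - x_e W lies in its closure. *)

Lemma sum_tuple_eq_seq (R : comNzRingType) (I : finType) n (x : seq I) (F : seq I -> R) :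
  \sum_(s : n.-tuple I) (x == s :> seq I)%:R * F s = if size x == n then F x else 0.
Proof.
have neq_x s : s != x :> seq I -> (x == s :> seq I)%:R * F s = 0.
  by rewrite eq_sym => /negbTE->; rewrite mul0r.
case: eqP => [sz_x | sz_x]; last first.
  by rewrite big1 // => s _; apply: neq_x; apply/eqP => s_x; apply: sz_x; rewrite -s_x size_tuple.
have sz_x' : size x == n by apply/eqP.
rewrite (bigD1 (Tuple sz_x')) //= eqxx mul1r big1 ?addr0 // => s ne_s.
by apply: neq_x; apply: contra_neq ne_s => s_x; apply: val_inj.
Qed.

Lemma sum_seq_eq_indicator (R : comNzRingType) (T : eqType) (L : seq T) (x : T) (F : T -> R) :
  uniq L -> x \in L -> \sum_(y <- L) (x == y)%:R * F y = F x.
Proof.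
move=> uL xL; rewrite (bigD1_seq x) //= eqxx mul1r big1 ?addr0 // => y ne_y.
by rewrite eq_sym (negbTE ne_y) mul0r.
Qed.

Lemma exchange_big_triangle (R : comNzRingType) n (F : nat -> nat -> R) :
  \sum_(0 <= a < n.+1) \sum_(0 <= b < (n - a).+1) F a b =
  \sum_(0 <= b < n.+1) \sum_(0 <= a < (n - b).+1) F a b.
Proof.
have square (G : nat -> nat -> R) : \sum_(0 <= a < n.+1) \sum_(0 <= b < (n - a).+1) G a b =
    \sum_(0 <= a < n.+1) \sum_(0 <= b < n.+1) (if (a + b <= n)%N then G a b else 0).
  apply: eq_big_nat => a /andP[_ le_a].
  have le_na : ((n - a).+1 <= n.+1)%N by rewrite ltnS leq_subr.
  rewrite (big_nat_widen _ _ _ _ _ le_na) big_mkcond /=.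
  by apply: eq_big_nat => b _; rewrite ltnS leq_subRL.
rewrite square (square (fun b a => F a b)) exchange_big /=.
by apply: eq_bigr => b _; apply: eq_bigr => a _; rewrite addnC.
Qed.

Lemma sum_triangle_rev (R : comNzRingType) n (H : nat -> nat -> R) :
  \sum_(0 <= k < n.+1) \sum_(0 <= i < (n - k).+1) H (n - i - k)%N (n - i)%N =
  \sum_(0 <= q < n.+1) \sum_(0 <= p < q.+1) H p q.
Proof.
rewrite (@exchange_big_triangle _ n (fun k i => H (n - i - k)%N (n - i)%N)) big_nat_rev.
apply: eq_big_nat => q /andP[_ le_qn]; rewrite ltnS in le_qn.
rewrite add0n subSS subKn // big_nat_rev.
apply: eq_big_nat => k /andP[_ le_kq]; rewrite ltnS in le_kq.
by rewrite add0n subSS subKn.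
Qed.

Lemma map_zip_nseq (A B : Type) (f : B -> A) k (s : seq B) :
  size s = k -> [seq vp.1 vp.2 | vp <- zip (nseq k f) s] = map f s.
Proof. by move=> <-; elim: s => //= z s ->. Qed.

Section SeriesCoefficients.

Variables (R : comNzRingType) (I E : finType) (Xe : E -> I).
Hypothesis Xe_inj : injective Xe.

Lemma bvec_eval i (w : seq E) :
  bvec R Xe i w = if w is [:: x] then (Xe x == i)%:R else 0.
Proof.
rewrite /bvec /ncvar; case: w => [|x [|y w]]; first by rewrite big1.
  case: (boolP (Xe x == i)) => [Xx_i | Xx_i].
    rewrite (bigD1 x) //= eqxx big1 ?addr0 // => e /andP[_ ne_e].
    by rewrite eqseq_cons andbT eq_sym (negbTE ne_e).
  rewrite big1 // => e Xe_i; rewrite eqseq_cons andbT.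
  suff /negbTE-> : x != e by [].
  by apply: contraNneq Xx_i => ->.
by rewrite big1 // => e _; rewrite eqseq_cons andbF.
Qed.

Lemma nc_rprod_bvec (t : seq I) (w : seq E) :
  nc_rprod [seq bvec R Xe i | i <- t] w = (map Xe (rev w) == t)%:R.
Proof.
elim/last_ind: t w => [|t i IH] w.
  by rewrite /nc_rprod /ncone; case: w => //= x w; rewrite rev_cons map_rcons; case: map.
rewrite /nc_rprod map_rcons foldl_rcons -/(nc_rprod _) /ncmul.
case: w => [|x w].
  by rewrite big_ord_recl big_ord0 bvec_eval /= mul0r addr0; case: t {IH}.
rewrite big_ord_recl bvec_eval mul0r add0r big_ord_recl /bump /= bvec_eval /= IH.
rewrite drop0 take0 big1 ?addr0; last first.
  by move=> [q lt_q] _; case: w lt_q => [|y w] //= _; rewrite bvec_eval mul0r.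
rewrite rev_cons map_rcons eqseq_rcons.
by case: (_ == t); case: (_ == i); rewrite ?mulr0 ?mul0r ?mulr1.
Qed.

Lemma mK_bvec_eval (c : seq I -> I -> R) k j w :
  mK c (nseq k (bvec R Xe)) j w = if size w == k then c (rev (map Xe w)) j else 0.
Proof.
rewrite /mK; under eq_bigr => s _.
  rewrite (map_zip_nseq _ (etrans (size_tuple s) (size_nseq _ _))) nc_rprod_bvec.
over.
by rewrite (sum_tuple_eq_seq _ _ (fun s => c s j)) size_map size_rev size_nseq map_rev.
Qed.

Lemma m0b_eval (c : seq I -> I -> R) j w : m0b c Xe j w = c (rev (map Xe w)) j.
Proof.
rewrite /m0b /ncsum big_ord_recr /= mK_bvec_eval eqxx big1 ?add0r // => k _.
by rewrite mK_bvec_eval (gtn_eqF (ltn_ord k)).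
Qed.

End SeriesCoefficients.

Section SandwichIdeal.

Variables (R : comNzRingType) (E I : finType) (P : I -> ncps R E) (Fp : I -> bool).

Definition nc_sandwich (B : seq E -> seq E -> R) (Q : ncps R E) : ncps R E :=
  fun w => \sum_(0 <= q < (size w).+1) \sum_(0 <= p < q.+1)
             B (take p (take q w)) (drop q w) * Q (drop p (take q w)).

Lemma ncmulA_eval (a Q b : ncps R E) w :
  ncmul (ncmul a Q) b w = \sum_(0 <= q < (size w).+1) \sum_(0 <= p < q.+1)
     a (take p (take q w)) * Q (drop p (take q w)) * b (drop q w).
Proof.
rewrite /ncmul big_mkord; apply: eq_bigr => [[q lt_q]] _ /=.
have le_qw : (q <= size w)%N by rewrite -ltnS.
by rewrite size_takel // big_mkord big_distrl.
Qed.

Definition words_upto (N : nat) : seq (seq E) :=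
  flatten [seq [seq val t | t : k.-tuple E] | k <- iota 0 N].

Lemma mem_words_upto N (w : seq E) : (size w < N)%N -> w \in words_upto N.
Proof.
move=> lt_wN; apply/flattenP; exists [seq val t | t : (size w).-tuple E].
  by apply/mapP; exists (size w); rewrite // mem_iota.
by apply/mapP; exists (in_tuple w); rewrite ?mem_enum.
Qed.

Definition nc_word (w0 : seq E) : ncps R E := fun w => (w == w0)%:R.

(* Truncating at length N, sum_(w1 w2 w3 = w) B(w1, w3) P(w2) becomes the finite sum of the
   ideal elements x^w1 P B(w1, -) over the words w1 shorter than N. *)
Lemma sandwich_closed_ideal (B : I -> seq E -> seq E -> R) (g : ncps R E) :
  (forall w, g w = \sum_(l | Fp l) nc_sandwich (B l) (P l) w) -> nc_closed_ideal P Fp g.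
Proof.
move=> def_g N; pose L := undup (words_upto N).
pose ts := [seq (nc_word w1, l, B l w1) | w1 <- L, l <- [seq l <- index_enum I | Fp l]].
exists (fun w => \sum_(t <- ts) ncmul (ncmul t.1.1 (P t.1.2)) t.2 w); split.
  exists ts; split => //; apply/all_allpairsP => w1 l _ /=.
  by rewrite mem_filter => /andP[].
move=> w lt_wN; rewrite def_g big_allpairs_dep /= [RHS]exchange_big /= big_filter.
apply: eq_bigr => l _; rewrite /nc_sandwich.
under eq_bigr => w1 _ do rewrite ncmulA_eval.
rewrite exchange_big; apply: eq_bigr => q _; rewrite exchange_big; apply: eq_bigr => p _.
rewrite -(sum_seq_eq_indicator (fun w1 => B l w1 _ * P l _) (undup_uniq (words_upto N))); last first.
  by rewrite mem_undup; apply: mem_words_upto; rewrite !size_take_min; lia.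
by apply: eq_bigr => w1 _; rewrite [B l _ _ * _]mulrC mulrA.
Qed.

End SandwichIdeal.

Section UnitalAinfinity.

Variables (R : comNzRingType) (I E : finType) (deg : I -> bool) (u : I).
Variables (c : seq I -> I -> R) (Xe : E -> I).
Hypothesis c_deg : forall s j, c s j != 0 -> deg j = odd (size s + count deg s).
Hypothesis c_ainf : forall s j,
  \sum_(k2 < (size s).+1) \sum_(i < (size s - k2).+1)
     (-1) ^+ count (fun t => ~~ deg t) (take i s) *
     \sum_(l : I) c (take i s ++ l :: drop (i + k2) s) j * c (take k2 (drop i s)) l = 0.
Hypothesis c_unitl : forall i j, c [:: u; i] j = (i == j)%:R.
Hypothesis c_unitr : forall i j, (-1) ^+ deg i * c [:: i; u] j = (i == j)%:R.
Hypothesis c_unit0 : forall s j, u \in s -> size s != 2%N -> c s j = 0.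
Hypothesis Xe_inj : injective Xe.
Hypothesis Xe_odd : forall e, deg (Xe e) = true.

Definition ainf_kernel (j l : I) (w1 w3 : seq E) : R :=
  c (rev (map Xe w3) ++ l :: rev (map Xe w1)) j.

Lemma m0b_odd_eq0 l w : deg l -> m0b c Xe l w = 0.
Proof.
move=> deg_l; rewrite m0b_eval //; apply/eqP; apply: contraTT deg_l => /c_deg->.
rewrite count_rev count_map size_rev size_map.
suff -> : count (preim Xe deg) w = size w by rewrite addnn odd_double.
by rewrite -(count_predT w); apply: eq_count => x; rewrite /preim /= Xe_odd.
Qed.

Lemma ainf_kernel_unit e w1 w3 :
  ainf_kernel (Xe e) u w1 w3 =
    (w3 == [::])%:R * (w1 == [:: e])%:R - (w1 == [::])%:R * (w3 == [:: e])%:R.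
Proof.
rewrite /ainf_kernel.
have [sz2 | sz_ne2] := eqVneq (size w1 + size w3)%N 1%N; last first.
  rewrite c_unit0 ?mem_cat ?mem_head ?orbT //; last first.
    by rewrite size_cat /= !size_rev !size_map; lia.
  case: w1 w3 sz_ne2 => [|x [|y w1]] [|z [|t w3]] //= _;
    by rewrite ?eqseq_cons ?andbF ?mulr0 ?mul0r ?subrr.
case: w1 w3 sz2 => [|x [|y w1]] [|z [|t w3]] //= _.
  have := c_unitr (Xe z) (Xe e); rewrite Xe_odd expr1 mulN1r inj_eq //.
  by rewrite eqseq_cons andbT mul0r mul1r sub0r => <-; rewrite opprK.
by rewrite c_unitl inj_eq // !eqseq_cons !andbT mul1r mul0r subr0.
Qed.

Lemma sandwich_unit e w :
  nc_sandwich (ainf_kernel (Xe e) u) (m0b c Xe u) w =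
    ncmul (ncvar R e) (m0b c Xe u) w - ncmul (m0b c Xe u) (ncvar R e) w.
Proof.
rewrite /nc_sandwich; under eq_bigr => q _ do under eq_bigr => p _ do
  rewrite ainf_kernel_unit mulrBl.
under eq_bigr => q _ do rewrite sumrB.
rewrite sumrB /ncmul; congr (_ - _).
  rewrite big_nat_recr //= big_nat big1 ?add0r; last first.
    move=> q /andP[_ lt_qw]; rewrite big1 // => p _.
    by rewrite -size_eq0 size_drop subn_eq0 leqNgt lt_qw !mul0r.
  rewrite drop_size take_size eqxx big_mkord.
  by apply: eq_bigr => p _; rewrite mul1r.
rewrite big_mkord; apply: eq_bigr => [[q le_qw]] _ /=; rewrite ltnS in le_qw.
rewrite big_nat_recl // take0 drop0 eqxx mul1r big_nat big1 ?addr0; last first.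
  move=> p /andP[_ lt_pq].
  suff -> : (take p.+1 (take q w) == [::]) = false by rewrite !mul0r.
  by rewrite -size_eq0 size_takel // size_takel.
by rewrite mulrC.
Qed.

Lemma sum_sandwich_ainf j w :
  \sum_(l : I) nc_sandwich (ainf_kernel j l) (m0b c Xe l) w = 0.
Proof.
rewrite -[RHS](c_ainf (rev (map Xe w)) j) /nc_sandwich exchange_big /=.
under eq_bigr => q _ do rewrite exchange_big /=.
rewrite -(sum_triangle_rev _ (fun p q => \sum_(l : I)
  ainf_kernel j l (take p (take q w)) (drop q w) * m0b c Xe l (drop p (take q w)))).
set n := size w; have sz_s : size (rev (map Xe w)) = n by rewrite size_rev size_map.
rewrite sz_s big_mkord; apply: eq_bigr => k _; rewrite big_mkord; apply: eq_bigr => i _.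
have -> : take i (rev (map Xe w)) = rev (map Xe (drop (n - i) w)).
  by rewrite take_rev size_map map_drop.
have -> : drop (i + k) (rev (map Xe w)) = rev (map Xe (take (n - i - k) (take (n - i) w))).
  by rewrite drop_rev size_map take_takel ?leq_subr // map_take subnDA.
have -> : take k (drop i (rev (map Xe w))) = rev (map Xe (drop (n - i - k) (take (n - i) w))).
  by rewrite drop_rev take_rev size_takel ?size_map ?leq_subr // map_drop map_take.
rewrite count_rev count_map (@eq_count _ _ pred0) => [|t]; last by rewrite /= Xe_odd.
rewrite count_pred0 expr0 mul1r; apply: eq_bigr => l _.
by rewrite m0b_eval.
Qed.

Lemma commutator_sandwich e w :
  ncsub (ncmul (m0b c Xe u) (ncvar R e)) (ncmul (ncvar R e) (m0b c Xe u)) w =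
    \sum_(l | Fidx deg u l) nc_sandwich (ainf_kernel (Xe e) l) (m0b c Xe l) w.
Proof.
have := sum_sandwich_ainf (Xe e) w.
rewrite (bigD1 u) //= sandwich_unit (bigID deg) /= big1 ?add0r; last first.
  move=> l /andP[_ deg_l]; rewrite /nc_sandwich big1 // => q _.
  by rewrite big1 // => p _; rewrite m0b_odd_eq0 // mulr0.
rewrite (eq_bigl (Fidx deg u)) => [|l]; last by rewrite /Fidx andbC.
by move/eqP; rewrite addrC addr_eq0 opprB => /eqP.
Qed.

End UnitalAinfinity.

Theorem theorem3p8 (R : comNzRingType) (I E : finType) (deg : I -> bool) (u : I)
    (c : seq I -> I -> R) (Xe : E -> I) :
  is_unital_Z2_Ainf deg u c ->
  injective Xe ->
  (forall e, deg (Xe e) = true) ->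
  forall e : E,
    nc_closed_ideal (m0b c Xe) (Fidx deg u)
      (ncsub (ncmul (m0b c Xe u) (ncvar R e)) (ncmul (ncvar R e) (m0b c Xe u))).
Proof.
move=> [c_deg c_ainf _ [c_unitl c_unitr c_unit0]] Xe_inj Xe_odd e.
apply: sandwich_closed_ideal => w.
exact: commutator_sandwich.
Qed.
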